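(* Consider $n\in\mathbb{N}$ users whose states $x^i_t\in\{0,1\}$ ($i\in\{1,\dots,n\}$, $t\in\mathbb{N}$) evolve under the controlled dynamics and strategies described in the context, and let $m_t=\frac1n\sum_{i=1}^n \mathbb{1}(x^i_t=1)$. For every $t\in\mathbb{N}$, every realization $m_{1:t}\in\mathcal{M}^t$ of the mean-field history, and all reserve and demand actions $g^r_{1:t}\in(\{1,\dots,k\})^t$, $g^d_{1:t}\in(\{1,\dots,k\})^t$, $$\mathbb{P}(m_{t+1}\mid m_{1:t},g^r_{1:t},g^d_{1:t})=\mathbb{P}(m_{t+1}\mid m_t,g^r_t,g^d_t),$$ i.e. the mean-field process is a controlled Markov process under the reserve and demand actions.
   Context: Fix $n\in\mathbb{N}$ users, a demand probability $p\in(0,1)$, and $k\in\mathbb{N}$ options $\{1,\dots,k\}$. Each option $u$ has a participation rate $\alpha(u)\in[0,1]$ and a delivery rate $q(u,m)\in(0,1]$ depending also on $m\in\mathcal{M}:=\{0,\frac1n,\frac2n,\dots,1\}$. User $i$ has state $x^i_t\in\{0,1\}$ ($1$ = has a demand). The mean-field is $m_t=\frac1n\sum_{i=1}^n\mathbb{1}(x^i_t=1)\in\mathcal{M}$. Given the option $u^i_t$ assigned to user $i$ and $m_t$, the user's next state has transition probabilities $\mathbb{P}(x^i_{t+1}=1\mid x^i_t=0,u^i_t,m_t)=(1-\alpha(u^i_t))p$, $\mathbb{P}(x^i_{t+1}=0\mid x^i_t=0,u^i_t,m_t)=1-(1-\alpha(u^i_t))p$, $\mathbb{P}(x^i_{t+1}=0\mid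 x^i_t=1,u^i_t,m_t)=q(u^i_t,m_t)$, $\mathbb{P}(x^i_{t+1}=1\mid x^i_t=1,u^i_t,m_t)=1-q(u^i_t,m_t)$; conditionally on the current joint states and actions, the users' transitions are mutually independent. Admissible control laws have the form $u^i_t=g_t(x^i_t,m_{1:t})$ with $g_t:\{0,1\}\times\mathcal{M}^t\to\{1,\dots,k\}$ (the same for all users). The reserve action is $g^r_t:=g_t(0,m_{1:t})$ and the demand action is $g^d_t:=g_t(1,m_{1:t})$, so $u^i_t=\mathbb{1}(x^i_t=0)g^r_t+\mathbb{1}(x^i_t=1)g^d_t$. *)

From mathcomp Require Import all_boot all_order all_algebra.
Set Implicit Arguments. Unset Strict Implicit. Unset Printing Implicit Defensive.
Import Order.TTheory GRing.Theory Num.Theory.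
Local Open Scope ring_scope.

(* Joint state of the n users: x i = true  <->  user i has a demand. *)
Definition jstate (n : nat) := {ffun 'I_n -> bool}.

(* Mean-field m = (number of users in state 1)/n, encoded by the count c in
   {0,..,n}, i.e. m = c/n.  The mean-field space M is thus 'I_n.+1. *)
Definition cnt (n : nat) (x : jstate n) : 'I_n.+1 := inord #|[set i | x i]|.

(* Admissible control law: g t b h = g_t(b, m_{1:t}) with b = x^i_t and
   h = m_{1:t} (time t starts at 1; options are 'I_k, i.e. {1..k} shifted). *)
Definition ctrl_law (n k : nat) := nat -> bool -> seq 'I_n.+1 -> 'I_k.

Definition trans1 (R : realFieldType) (n k : nat) (p : R) (alpha : 'I_k -> R)
  (q : 'I_k -> 'I_n.+1 -> R) (u : 'I_k) (c : 'I_n.+1) (b b' : bool) : R :=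
  if b then (if b' then 1 - q u c else q u c)
  else (if b' then (1 - alpha u) * p else 1 - (1 - alpha u) * p).

Definition jtrans (R : realFieldType) (n k : nat) (p : R) (alpha : 'I_k -> R)
  (q : 'I_k -> 'I_n.+1 -> R) (g : ctrl_law n k) (t : nat) (h : seq 'I_n.+1)
  (x x' : jstate n) : R :=
  \prod_(i < n) trans1 p alpha q (g t (x i) h) (cnt x) (x i) (x' i).

Definition pathprob (R : realFieldType) (n k : nat) (p : R) (alpha : 'I_k -> R)
  (q : 'I_k -> 'I_n.+1 -> R) (init : {ffun jstate n -> R}) (g : ctrl_law n k)
  (xs : seq (jstate n)) : R :=
  let x0 : jstate n := [ffun => false] in
  let hs := map (@cnt n) xs in
  if xs is x1 :: _ then
    init x1 * \prod_(j < (size xs).-1)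
       jtrans p alpha q g j.+1 (take j.+1 hs) (nth x0 xs j) (nth x0 xs j.+1)
  else 0.

Definition mhist_prob (R : realFieldType) (n k : nat) (p : R) (alpha : 'I_k -> R)
  (q : 'I_k -> 'I_n.+1 -> R) (init : {ffun jstate n -> R}) (g : ctrl_law n k)
  (h : seq 'I_n.+1) : R :=
  \sum_(xs : (size h).-tuple (jstate n) | map (@cnt n) xs == h)
     pathprob p alpha q init g xs.

From mathcomp Require Import all_boot all_order all_algebra perm.
Set Implicit Arguments. Unset Strict Implicit. Unset Printing Implicit Defensive.
Import Order.TTheory GRing.Theory Num.Theory.
Local Open Scope ring_scope.

(* Users are exchangeable: a joint state is determined up to a permutation of
   the users by its count, the one-step transition of the joint state commutes
   with permutations, and each user's option depends only on its own state and
   on the common history.  So the probability that the next count is c', given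
   the current joint state x, depends on x only through cnt x = m_t and on the
   two actions g^r_t, g^d_t.  Summing the path probabilities over the last joint
   state then gives P(m_{1:t+1}) = P(m_{1:t}) * K(m_t, g^r_t, g^d_t, m_{t+1}). *)

Lemma card_set_true_perm n (x y : {ffun 'I_n -> bool}) :
  #|[set i | x i]| = #|[set i | y i]| -> exists s : 'S_n, forall i, x i = y (s i).
Proof.
have count_true (z : {ffun 'I_n -> bool}) :
    count_mem true [tuple z i | i < n] = #|[set i | z i]|.
  rewrite /= count_map cardE /enum_mem size_filter count_filter.
  by apply: eq_count => i /=; rewrite !inE; case: (z i).
move=> xy; have /tuple_permP[s xyE] : perm_eq [tuple x i | i < n] [tuple y i | i < n].
  apply/allP => b _.
  have count_false s : count_mem false s = (size s - count_mem true s)%N.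
    by rewrite -(count_predC (pred1 true) s) addKn; apply: eq_count => -[].
  by case: b; rewrite /= ?count_false ?size_tuple !count_true xy.
exists s => i; have := congr1 (nth false ^~ i) xyE.
by rewrite /= !nth_mktuple tnth_mktuple.
Qed.

Lemma big_tuple_rcons (V : nmodType) (T : finType) N (F : seq T -> V) :
  \sum_(t : N.+1.-tuple T) F t = \sum_(s : N.-tuple T) \sum_(x : T) F (rcons s x).
Proof.
rewrite pair_big /= (reindex (fun sx : N.-tuple T * T => rcons_tuple sx.1 sx.2)) //.
have lastI_tuple (t : N.+1.-tuple T) :
    rcons (belast (thead t) (behead t)) (last (thead t) (behead t)) = t.
  by rewrite -lastI {3}(tuple_eta t).
exists (fun t => (belast_tuple (thead t) (behead_tuple t), last (thead t) (behead t))).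
  move=> [s x] _; have /rcons_inj[belastE lastE] := lastI_tuple (rcons_tuple s x).
  by congr pair => //; apply: val_inj.
by move=> t _; apply: val_inj; rewrite /= lastI_tuple.
Qed.

Lemma cnt_card n (x : jstate n) : nat_of_ord (cnt x) = #|[set i | x i]|.
Proof. by rewrite inordK // ltnS (leq_trans (max_card _)) ?card_ord. Qed.

Lemma cnt_perm n (s : 'S_n) (x : jstate n) : cnt [ffun i => x (s i)] = cnt x.
Proof.
rewrite /cnt -(card_preimset [set i | x i] (@perm_inj _ s)); congr inord.
by apply: eq_card => i; rewrite !inE ffunE.
Qed.

Lemma cnt_eq_perm n (x y : jstate n) :
  cnt x = cnt y -> exists s : 'S_n, forall i, x i = y (s i).
Proof. by move/(congr1 val); rewrite /= !cnt_card; apply: card_set_true_perm. Qed.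

Section MeanFieldKernel.
Variables (R : realFieldType) (n k : nat) (p : R) (alpha : 'I_k -> R).
Variable q : 'I_k -> 'I_n.+1 -> R.

Definition next_cnt_prob (u : bool -> 'I_k) (x : jstate n) (c' : 'I_n.+1) : R :=
  \sum_(y : jstate n | cnt y == c')
    \prod_(i < n) trans1 p alpha q (u (x i)) (cnt x) (x i) (y i).

Lemma next_cnt_prob_perm u (s : 'S_n) (x : jstate n) c' :
  next_cnt_prob u [ffun i => x (s i)] c' = next_cnt_prob u x c'.
Proof.
rewrite /next_cnt_prob cnt_perm.
rewrite (reindex_inj (h := fun y : jstate n => [ffun i => y (s i)])); last first.
  by move=> y z /ffunP yz; apply/ffunP => i; have := yz (s^-1 i)%g; rewrite !ffunE permKV.
apply: eq_big => [y | y _]; first by rewrite cnt_perm.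
rewrite [RHS](reindex_inj (@perm_inj _ s)); apply: eq_bigr => i _.
by rewrite !ffunE.
Qed.

Lemma next_cnt_prob_cnt u (x y : jstate n) c' :
  cnt x = cnt y -> next_cnt_prob u x c' = next_cnt_prob u y c'.
Proof.
move=> /cnt_eq_perm[s xy].
have -> : x = [ffun i => y (s i)] by apply/ffunP => i; rewrite ffunE.
exact: next_cnt_prob_perm.
Qed.

(* By next_cnt_prob_cnt any joint state of count c is a valid representative;
   every c <= n is attained, so the junk branch 0 is never used. *)
Definition mf_kernel (c : 'I_n.+1) (ur ud : 'I_k) (c' : 'I_n.+1) : R :=
  if [pick x : jstate n | cnt x == c] is Some x
  then next_cnt_prob (fun b => if b then ud else ur) x c' else 0.

Lemma mf_kernelE u (x : jstate n) c' :
  mf_kernel (cnt x) (u false) (u true) c' = next_cnt_prob u x c'.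
Proof.
rewrite /mf_kernel; case: pickP => [z /eqP zx | /(_ x)]; last by rewrite eqxx.
rewrite (next_cnt_prob_cnt _ _ zx); apply: eq_bigr => y _; apply: eq_bigr => i _.
by case: (x i).
Qed.

End MeanFieldKernel.

Section MeanFieldHistory.
Variables (R : realFieldType) (n k : nat) (p : R) (alpha : 'I_k -> R).
Variables (q : 'I_k -> 'I_n.+1 -> R) (init : {ffun jstate n -> R}) (g : ctrl_law n k).

Lemma pathprob_rcons (x0 : jstate n) xs y :
  pathprob p alpha q init g (rcons (x0 :: xs) y) =
  pathprob p alpha q init g (x0 :: xs) *
  jtrans p alpha q g (size xs).+1 (map (@cnt n) (x0 :: xs)) (last x0 xs) y.
Proof.
rewrite /pathprob rcons_cons /= size_rcons big_ord_recr /= mulrA.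
have take_rcons m (s : seq 'I_n.+1) c : (m <= size s)%N -> take m (rcons s c) = take m s.
  by move=> ms; rewrite -cats1 takel_cat.
congr (_ * _ * _).
  apply: eq_bigr => j _; have jxs : (j < size xs)%N := ltn_ord j.
  rewrite map_rcons take_rcons; last by rewrite size_map ltnW.
  by rewrite -rcons_cons !nth_rcons /= jxs ltnS ltnW.
rewrite map_rcons take_rcons ?size_map // take_oversize ?size_map //.
rewrite -rcons_cons !nth_rcons /= ltnS leqnn ltnn eqxx.
by rewrite -[size xs]/((size (x0 :: xs)).-1) nth_last.
Qed.

Lemma sum_jtrans_cnt t h (x : jstate n) c' :
  \sum_(y : jstate n | cnt y == c') jtrans p alpha q g t h x y =
  mf_kernel p alpha q (cnt x) (g t false h) (g t true h) c'.
Proof. by rewrite (mf_kernelE p alpha q (fun b => g t b h)). Qed.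

Lemma mhist_prob_rcons h c' : h != [::] ->
  mhist_prob p alpha q init g (rcons h c') =
  mhist_prob p alpha q init g h *
  mf_kernel p alpha q (last ord0 h) (g (size h) false h) (g (size h) true h) c'.
Proof.
move=> h_neq0; rewrite /mhist_prob size_rcons big_mkcond.
rewrite (big_tuple_rcons (size h) (fun xs => if map (@cnt n) xs == rcons h c'
                                    then pathprob p alpha q init g xs else 0)).
rewrite [in RHS]big_mkcond mulr_suml; apply: eq_bigr => -[[|x0 xs] size_xs] _.
  by case: h h_neq0 size_xs.
under eq_bigr => y _ do rewrite map_rcons eqseq_rcons.
have [xsE | hE] := eqVneq (map (@cnt n) (x0 :: xs)) h; last first.
  by rewrite mul0r big1 // => y _; rewrite (negbTE hE).
rewrite -big_mkcond [tval _]/=.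
under eq_bigr => y _ do rewrite pathprob_rcons.
rewrite -mulr_sumr sum_jtrans_cnt; congr (_ * _).
by rewrite -xsE size_map /= last_map.
Qed.

End MeanFieldHistory.

Theorem theorem1 (R : realFieldType) (n k : nat) (p : R)
  (alpha : 'I_k -> R) (q : 'I_k -> 'I_n.+1 -> R) :
  (0 < n)%N -> 0 < p < 1 ->
  (forall u, 0 <= alpha u <= 1) ->
  (forall u c, 0 < q u c <= 1) ->
  exists K : 'I_n.+1 -> 'I_k -> 'I_k -> 'I_n.+1 -> R,
    forall (init : {ffun jstate n -> R}) (g : ctrl_law n k),
      (forall x, 0 <= init x) -> \sum_x init x = 1 ->
      forall (t : nat) (h : seq 'I_n.+1),
        (0 < t)%N -> size h = t ->
        0 < mhist_prob p alpha q init g h ->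
        forall m' : 'I_n.+1,
          mhist_prob p alpha q init g (rcons h m') / mhist_prob p alpha q init g h
          = K (last ord0 h) (g t false h) (g t true h) m'.
Proof.
(* The factorization is an algebraic identity: no constraint on the parameters
   or on init is needed, only P(m_{1:t}) != 0 to divide by it. *)
move=> _ _ _ _; exists (mf_kernel p alpha q).
move=> init g _ _ t h t_gt0 size_h h_pos m'; rewrite -size_h in t_gt0 *.
rewrite mhist_prob_rcons; last by rewrite -size_eq0 -lt0n.
by rewrite mulrC mulKf // gt_eqF.
Qed.
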